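(* Consider an execution of the convergence algorithm described in the context, in the CORDA model under a fully asynchronous scheduler, with $n>5f$ robots of which at most $f$ are Byzantine and $m$ are correct. Fix a time $t_0$ and a distance $b>0$. Let $S$ be a set of correct robots with $|S|\ge m-2f$. Suppose there exists a time $t_1\ge t_0$ such that $\max UD_S(t)\le \max UD(t_0)-b$ for every $t>t_1$. Then every destination computed by any correct robot in a cycle that starts after $t_1$ is $\le \max UD(t_0)-b/2$.
   Context: Setting: $n$ robots on the real line, at most $f$ Byzantine (arbitrary positions). Robots are anonymous, oblivious, have no common orientation, and have unlimited visibility with strong multiplicity detection. Correct robots run Look–Compute–Move cycles in the CORDA model: phases of different robots interleave arbitrarily, and the adversary may stop robot $i$ during a Move only after it has moved at least $\delta_i>0$ toward its destination or reached it. The fully asynchronous scheduler only guarantees that each robot is activated infinitely often. Algorithm: with snapshot sorted $P_1\le\dots\le P_n$ and own position $x_i$, robot $i$ is elected iff $x_i\le P_{f+1}$ or $x_i\ge P_{n-f}$. If elected, its destination is the midpoint of $\min(x_i,P_{2f+1})$ and $\max(x_i,P_{n-2f})$, which is the center of $trim^i_{2f}(P)$ (remove, among the $2f$ smallest positions, those below $x_i$, and, among the $2f$ largest positions, those above $x_i$). Notation: the destination of a correct robot at time $t$ is the last destination it computed at or before $t$ (its position if none). $UD(t)$ is the multiset union of positions and destinations of all correct robots at time $t$. $UD_S(t)$ is the same for the robots in $S$ only. *)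

From HB Require Import structures.
From mathcomp Require Import all_boot all_order all_algebra.
From mathcomp Require Import reals.
Set Implicit Arguments. Unset Strict Implicit. Unset Printing Implicit Defensive.
Import Order.TTheory GRing.Theory Num.Theory.
Local Open Scope ring_scope.

Section RobotDefs.
Variable R : realType.

Definition snapshot (n : nat) (p : 'I_n -> R) : seq R :=
  sort <=%R [seq p j | j <- enum 'I_n].

(* 1-indexed access: Pidx P k = P_k. *)
Definition Pidx (P : seq R) (k : nat) : R := nth 0 P k.-1.

Definition elected (n f : nat) (P : seq R) (x : R) : bool :=
  (x <= Pidx P f.+1) || (Pidx P (n - f) <= x).

(* Destination computed by the algorithm: center of trim^i_{2f}(P) if
   elected, otherwise the robot stays where it is. *)
Definition algo_dest (n f : nat) (P : seq R) (x : R) : R :=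
  if elected n f P x then
    (Num.min x (Pidx P (2 * f).+1) + Num.max x (Pidx P (n - 2 * f))) / 2
  else x.

(* One Look-Compute-Move cycle: Look (snapshot, and computation of the
   destination from it) at time [look], Move during [mstart, mend]. *)
Record lcmcycle := LCMCycle { look : R; mstart : R; mend : R }.

Definition between (a b x : R) : Prop := Num.min a b <= x <= Num.max a b.

Definition cdest (n f : nat) (pos : 'I_n -> R -> R) (cyc : 'I_n -> nat -> lcmcycle)
    (i : 'I_n) (k : nat) : R :=
  let L := look (cyc i k) in
  algo_dest n f (snapshot (fun j => pos j L)) (pos i L).

Definition celected (n f : nat) (pos : 'I_n -> R -> R) (cyc : 'I_n -> nat -> lcmcycle)
    (i : 'I_n) (k : nat) : bool :=
  let L := look (cyc i k) in
  elected n f (snapshot (fun j => pos j L)) (pos i L).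

(* B = set of Byzantine robots (positions pos j t unconstrained for j in B);
   cyc i k = k-th cycle of correct robot i; destf i t = destination of
   correct robot i at time t (last destination computed at or before t,
   its position if none). *)
Definition corda_execution (n f : nat) (B : {set 'I_n}) (delta : 'I_n -> R)
    (pos : 'I_n -> R -> R) (cyc : 'I_n -> nat -> lcmcycle)
    (destf : 'I_n -> R -> R) : Prop :=
  forall i, i \notin B ->
  0 < delta i /\
      (forall k, look (cyc i k) <= mstart (cyc i k) /\
                 mstart (cyc i k) <= mend (cyc i k) /\
                 mend (cyc i k) <= look (cyc i k.+1)) /\
      (* activated infinitely often along the (divergent) timeline *)
      (forall T, exists k, T < look (cyc i k)) /\
      (forall s t, s <= look (cyc i 0) -> t <= look (cyc i 0) -> pos i s = pos i t) /\
      (forall k s t, look (cyc i k) <= s <= mstart (cyc i k) ->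
                     look (cyc i k) <= t <= mstart (cyc i k) -> pos i s = pos i t) /\
      (forall k s t, mend (cyc i k) <= s <= look (cyc i k.+1) ->
                     mend (cyc i k) <= t <= look (cyc i k.+1) -> pos i s = pos i t) /\
      (* Move: monotone motion toward the destination, without overshoot *)
      (forall k s t, mstart (cyc i k) <= s -> s <= t -> t <= mend (cyc i k) ->
                     between (pos i s) (cdest f pos cyc i k) (pos i t)) /\
      (* the adversary stops the move only after delta_i or at the destination *)
      (forall k, pos i (mend (cyc i k)) = cdest f pos cyc i k \/
                 delta i <= `|pos i (mend (cyc i k)) - pos i (mstart (cyc i k))|) /\
      (* destination at time t = last destination computed at or before t
         (only elected robots compute a destination); its position if none *)
      (forall t, (forall k, look (cyc i k) <= t -> ~~ celected f pos cyc i k) ->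
                 destf i t = pos i t) /\
      (forall k t, look (cyc i k) <= t -> celected f pos cyc i k ->
                   (forall k', (k < k')%N -> look (cyc i k') <= t ->
                               ~~ celected f pos cyc i k') ->
                   destf i t = cdest f pos cyc i k).

(* UD_S(t): multiset (as a seq) of positions and destinations of robots in S *)
Definition UDS (n : nat) (S : {set 'I_n}) (pos destf : 'I_n -> R -> R) (t : R)
  : seq R := flatten [seq [:: pos i t; destf i t] | i <- enum S].

Definition seqmax (s : seq R) : R := foldr Num.max (head 0 s) s.

End RobotDefs.

From HB Require Import structures.
From mathcomp Require Import all_boot all_order all_algebra.
From mathcomp Require Import reals.
From mathcomp Require Import lra zify.
Set Implicit Arguments. Unset Strict Implicit. Unset Printing Implicit Defensive.
Import Order.TTheory GRing.Theory Num.Theory.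
Local Open Scope ring_scope.

(* Let M = max UD(t0). A correct robot only moves towards its current
   destination, and a new destination is at most max(x_i, P_{n-2f}); since at
   most 2f robots are Byzantine, P_{n-2f} <= M as long as all correct robots are
   at or below M. Induction over the Look events of correct robots therefore
   keeps every correct robot at or below M after t0. At a Look after t1 the
   robots of S, at least 2f+1 of them, are at or below M - b, hence
   P_{2f+1} <= M - b, and the new destination is the midpoint of a point
   <= M - b and a point <= M. *)

Lemma le_seqmax (R : realType) (s : seq R) x : x \in s -> x <= seqmax s.
Proof.
rewrite /seqmax; elim: s (head 0 s) => //= y s IH a.
by rewrite inE le_max => /orP [/eqP->|/IH->]; rewrite ?lexx ?orbT.
Qed.

Lemma mem_UDS_pos (R : realType) n (S : {set 'I_n}) (pos destf : 'I_n -> R -> R) t j :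
  j \in S -> pos j t \in UDS S pos destf t.
Proof. by move=> hj; apply/flatten_mapP; exists j; rewrite ?mem_enum // inE eqxx. Qed.

Lemma mem_UDS_dest (R : realType) n (S : {set 'I_n}) (pos destf : 'I_n -> R -> R) t j :
  j \in S -> destf j t \in UDS S pos destf t.
Proof. by move=> hj; apply/flatten_mapP; exists j; rewrite ?mem_enum // !inE eqxx orbT. Qed.

Lemma count_enum (T : finType) (P : pred T) : count P (enum T) = #|P|.
Proof. by rewrite enumT cardE /enum_mem size_filter. Qed.

Lemma between_le_max (R : realType) (a b x : R) : between a b x -> x <= Num.max a b.
Proof. by case/andP. Qed.

Lemma between_same (R : realType) (a x : R) : between a a x -> x = a.
Proof. by rewrite /between minxx maxxx => /andP [h1 h2]; apply/le_anti; rewrite h1 h2. Qed.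

Lemma nth_sorted_le (R : realType) (s : seq R) (c : R) i r :
  sorted <=%R s -> (i + r < size s)%N ->
  (count (fun y => (c < y)%R) s <= r)%N -> nth 0 s i <= c.
Proof.
move=> s_sorted hi hc; rewrite leNgt; apply/negP => c_lt_si.
suff : (size s - i <= count (fun y => (c < y)%R) s)%N by lia.
have /eqP drop_above : count (fun y => (c < y)%R) (drop i s) == size (drop i s).
  rewrite -all_count; apply/(all_nthP 0) => j; rewrite size_drop => hj.
  rewrite nth_drop; apply: (lt_le_trans c_lt_si).
  apply: (sorted_leq_nth le_trans lexx 0 s_sorted); rewrite ?inE ?leq_addr //=.
  - lia.
  - by rewrite -ltn_subRL.
by rewrite -{2}(cat_take_drop i s) count_cat drop_above size_drop leq_addl.
Qed.

Lemma Pidx_snapshot_le (R : realType) n (p : 'I_n -> R) (A : {set 'I_n}) c k :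
  (forall j, j \notin A -> p j <= c) -> (0 < k)%N -> (k + #|A| <= n)%N ->
  Pidx (snapshot p) k <= c.
Proof.
move=> p_le k_gt0 hk; apply: (@nth_sorted_le _ _ _ _ #|A|).
- exact: (sort_sorted le_total).
- by rewrite /snapshot size_sort size_map size_enum_ord; lia.
rewrite /snapshot count_sort count_map count_enum.
apply: subset_leq_card; apply/subsetP => j; rewrite !inE /= => c_lt_pj.
by apply: contraT => /p_le; rewrite leNgt c_lt_pj.
Qed.

Lemma algo_dest_le (R : realType) n f (P : seq R) x c :
  x <= c -> Pidx P (n - 2 * f) <= c -> algo_dest n f P x <= c.
Proof.
move=> hx hP; rewrite /algo_dest; case: ifP => // _.
have : Num.min x (Pidx P (2 * f).+1) <= c by rewrite ge_min hx.
have : Num.max x (Pidx P (n - 2 * f)) <= c by rewrite ge_max hx hP.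
lra.
Qed.

Lemma algo_dest_le_half (R : realType) n f (P : seq R) x c b :
  elected n f P x -> x <= c -> Pidx P (2 * f).+1 <= c - b ->
  Pidx P (n - 2 * f) <= c -> algo_dest n f P x <= c - b / 2.
Proof.
move=> el hx hlo hhi; rewrite /algo_dest el.
have : Num.min x (Pidx P (2 * f).+1) <= c - b by rewrite ge_min hlo orbT.
have : Num.max x (Pidx P (n - 2 * f)) <= c by rewrite ge_max hx hhi.
lra.
Qed.

Section Execution.
Variables (R : realType) (n f : nat) (B : {set 'I_n}) (delta : 'I_n -> R).
Variables (pos : 'I_n -> R -> R) (cyc : 'I_n -> nat -> lcmcycle R).
Variable destf : 'I_n -> R -> R.
Hypothesis exec : corda_execution f B delta pos cyc destf.

Lemma cycle_ordered j k : j \notin B ->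
  [/\ look (cyc j k) <= mstart (cyc j k), mstart (cyc j k) <= mend (cyc j k)
    & mend (cyc j k) <= look (cyc j k.+1)].
Proof. by move=> /exec [_ [/(_ k) [? [? ?]] _]]. Qed.

Lemma look_mono j k1 k2 : j \notin B -> (k1 <= k2)%N ->
  look (cyc j k1) <= look (cyc j k2).
Proof.
move=> hj /subnK <-; elim: (k2 - k1)%N => [|d IH]; first by rewrite add0n.
have [h1 h2 h3] := cycle_ordered (d + k1) hj.
by rewrite addSn (le_trans IH) // (le_trans h1) // (le_trans h2).
Qed.

Lemma look_unbounded j T : j \notin B -> exists k, T < look (cyc j k).
Proof. by move=> /exec [_ [_ [/(_ T) ? _]]]. Qed.

Lemma look_unbounded_all T : exists K, forall j, j \notin B -> T < look (cyc j K).
Proof.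
suff [K hK] : exists K, forall j, j \in enum 'I_n -> j \notin B -> T < look (cyc j K).
  by exists K => j; apply: hK; rewrite mem_enum.
elim: (enum 'I_n) => [|j l [K1 hK1]]; first by exists 0%N.
have [jB|jNB] := boolP (j \in B).
  by exists K1 => j'; rewrite inE => /orP [/eqP -> | /hK1 //]; rewrite jB.
have [K2 hK2] := look_unbounded T jNB.
exists (maxn K1 K2) => j'; rewrite inE => /orP [/eqP -> _ | j'l j'NB].
  by rewrite (lt_le_trans hK2) // look_mono // leq_maxr.
by rewrite (lt_le_trans (hK1 _ j'l j'NB)) // look_mono // leq_maxl.
Qed.

Lemma pos_before_first_look j s t : j \notin B ->
  s <= look (cyc j 0) -> t <= look (cyc j 0) -> pos j s = pos j t.
Proof. by move=> /exec [_ [_ [_ [st0 _]]]]; apply: st0. Qed.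

Lemma cycle_containing j s : j \notin B -> look (cyc j 0) < s ->
  exists k, look (cyc j k) < s <= look (cyc j k.+1).
Proof.
move=> hj h0.
have ex_after : exists k, s <= look (cyc j k).
  by have [k hk] := look_unbounded s hj; exists k; apply: ltW.
case: (ex_minnP ex_after) => [[|k] hk kmin]; first by rewrite leNgt h0 in hk.
by exists k; rewrite hk andbT ltNge; apply/negP => /kmin; rewrite ltnn.
Qed.

(* A robot is stationary outside its Move phase. *)
Lemma pos_clamp j k u : j \notin B ->
  look (cyc j k) <= u <= look (cyc j k.+1) ->
  pos j u = pos j (Num.min (Num.max u (mstart (cyc j k))) (mend (cyc j k))).
Proof.
move=> hj /andP [hl hu]; have [o1 o2 o3] := cycle_ordered k hj.
have [_ [_ [_ [_ [st1 [st2 _]]]]]] := exec hj.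
have [u_ms|ms_u] := leP u (mstart (cyc j k)).
  by rewrite (min_l o2); apply: (st1 k); rewrite ?hl ?u_ms ?o1 ?lexx.
have [//|me_u] := leP u (mend (cyc j k)).
by apply: (st2 k); rewrite ?hu ?(ltW me_u) ?o3 ?lexx.
Qed.

Lemma pos_between_cdest j k s t : j \notin B ->
  look (cyc j k) <= s -> s <= t -> t <= look (cyc j k.+1) ->
  between (pos j s) (cdest f pos cyc j k) (pos j t).
Proof.
move=> hj hs st ht; have [o1 o2 o3] := cycle_ordered k hj.
have [_ [_ [_ [_ [_ [_ [move_mono _]]]]]]] := exec hj.
rewrite (@pos_clamp j k s) ?hs ?(le_trans st ht) //.
rewrite (@pos_clamp j k t) ?ht ?(le_trans hs st) //.
apply: (move_mono k).
- by rewrite le_min le_max lexx orbT o2.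
- by rewrite le_min2 // le_max2.
- by rewrite ge_min lexx orbT.
Qed.

Lemma destf_elected_cycle j k t : j \notin B -> celected f pos cyc j k ->
  look (cyc j k) <= t < look (cyc j k.+1) -> destf j t = cdest f pos cyc j k.
Proof.
move=> hj el /andP [kt tk1]; have [_ [_ [_ [_ [_ [_ [_ [_ [_ destf_last]]]]]]]]] := exec hj.
apply: destf_last => // k' kk' k't; exfalso.
by move: (le_trans (look_mono hj kk') k't); rewrite leNgt tk1.
Qed.

Lemma pos_cycle_unelected j k u : j \notin B -> ~~ celected f pos cyc j k ->
  look (cyc j k) <= u <= look (cyc j k.+1) -> pos j u = pos j (look (cyc j k)).
Proof.
move=> hj /negbTE nel /andP [ku uk1].
have cdest_pos : cdest f pos cyc j k = pos j (look (cyc j k)).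
  by move: nel; rewrite /celected /cdest /algo_dest /= => ->.
by apply: between_same; rewrite -{2}cdest_pos; apply: pos_between_cdest.
Qed.

Hypotheses (byz_le : (#|B| <= 2 * f)%N) (two_f_lt_n : (2 * f < n)%N).

Lemma cdest_le j k c : j \notin B ->
  (forall j', j' \notin B -> pos j' (look (cyc j k)) <= c) -> cdest f pos cyc j k <= c.
Proof.
move=> hj all_le; apply: algo_dest_le; first exact: all_le.
by apply: (Pidx_snapshot_le (A := B)) => //; lia.
Qed.

(* Induction measure: it drops strictly at every Look of a correct robot among
   its first K cycles. *)
Definition past_looks K (t : R) : {set 'I_n * 'I_K} :=
  [set p : 'I_n * 'I_K | (p.1 \notin B) && (look (cyc p.1 p.2) < t)].

Lemma card_past_looks_lt K j (k : 'I_K) t : j \notin B -> look (cyc j k) < t ->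
  (#|past_looks K (look (cyc j k))| < #|past_looks K t|)%N.
Proof.
move=> hj kt; apply/proper_card/properP; split.
  by apply/subsetP => -[j' k']; rewrite !inE /= => /andP [-> /lt_trans ->].
by exists (j, k); rewrite !inE /= ?hj ?kt ?ltxx.
Qed.

(* Within the cycle containing s, the robot moves between where it was at some
   earlier time u and its destination; choose u = look k if the snapshot was taken
   after t0, and u = t0 otherwise, where the destination is already part of UD(t0). *)
Lemma pos_le_in_cycle t0 M j k s :
  (forall j, j \notin B -> pos j t0 <= M /\ destf j t0 <= M) ->
  j \notin B -> t0 < s -> look (cyc j k) < s <= look (cyc j k.+1) ->
  (t0 <= look (cyc j k) -> forall j', j' \notin B -> pos j' (look (cyc j k)) <= M) ->
  pos j s <= M.
Proof.
move=> UD0 hj t0s /andP [ks sk1] at_look.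
have [t0k|kt0] := leP t0 (look (cyc j k)).
  have all_le := at_look t0k.
  apply: le_trans (between_le_max (pos_between_cdest hj (lexx _) (ltW ks) sk1)) _.
  by rewrite ge_max all_le // cdest_le.
have t0_in_cycle : look (cyc j k) <= t0 < look (cyc j k.+1).
  by rewrite (ltW kt0) (lt_le_trans t0s sk1).
have [el|nel] := boolP (celected f pos cyc j k).
  apply: le_trans (between_le_max (pos_between_cdest hj (ltW kt0) (ltW t0s) sk1)) _.
  have [pos_t0 destf_t0] := UD0 j hj.
  by rewrite -(destf_elected_cycle hj el t0_in_cycle) ge_max pos_t0 destf_t0.
rewrite (pos_cycle_unelected hj nel (_ : _ <= s <= _)) ?(ltW ks) ?sk1 //.
rewrite -(pos_cycle_unelected hj nel (_ : _ <= t0 <= _)); first exact: (UD0 j hj).1.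
by case/andP: t0_in_cycle => -> /ltW.
Qed.

Lemma correct_pos_le t0 M :
  (forall j, j \notin B -> pos j t0 <= M /\ destf j t0 <= M) ->
  forall t, t0 <= t -> forall j, j \notin B -> pos j t <= M.
Proof.
move=> UD0 t t0t; have [K hK] := look_unbounded_all t.
suff H : forall N s, (#|past_looks K s| < N)%N -> t0 <= s <= t ->
    forall j, j \notin B -> pos j s <= M.
  by apply: (H _ t (ltnSn _)); rewrite t0t lexx.
elim=> [//|N IH] s hN /andP [t0s st] j hj.
have [->|s_ne_t0] := eqVneq s t0; first exact: (UD0 j hj).1.
have {s_ne_t0}t0s : t0 < s by rewrite lt_neqAle eq_sym s_ne_t0 t0s.
have [s_first|first_s] := leP s (look (cyc j 0)).
  rewrite (pos_before_first_look hj s_first (le_trans (ltW t0s) s_first)).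
  exact: (UD0 j hj).1.
have [k /andP [ks sk1]] := cycle_containing hj first_s.
apply: (pos_le_in_cycle (k := k) UD0 hj t0s); rewrite ?ks ?sk1 // => t0k.
have kK : (k < K)%N.
  rewrite ltnNge; apply/negP => /(look_mono hj) Kk.
  by move: (lt_le_trans (hK j hj) Kk); rewrite ltNge (ltW (lt_le_trans ks st)).
apply: (IH (look (cyc j (Ordinal kK)))); last by rewrite t0k (ltW (lt_le_trans ks st)).
exact: leq_trans (card_past_looks_lt (k := Ordinal kK) hj ks) (ltnSE hN).
Qed.

End Execution.

Theorem lemma10 (R : realType) (n f : nat) (B S : {set 'I_n})
    (delta : 'I_n -> R) (pos : 'I_n -> R -> R) (cyc : 'I_n -> nat -> lcmcycle R)
    (destf : 'I_n -> R -> R) (t0 t1 b : R) :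
  (5 * f < n)%N ->
  (#|B| <= f)%N ->
  corda_execution f B delta pos cyc destf ->
  0 < b ->
  S \subset ~: B ->
  (#|~: B| - 2 * f <= #|S|)%N ->
  t0 <= t1 ->
  (forall t, t1 < t ->
     seqmax (UDS S pos destf t) <= seqmax (UDS (~: B) pos destf t0) - b) ->
  forall (i : 'I_n) (k : nat), i \notin B -> t1 < look (cyc i k) ->
    celected f pos cyc i k ->
    cdest f pos cyc i k <= seqmax (UDS (~: B) pos destf t0) - b / 2.
Proof.
move=> hn hB exec _ _ hS t01 UDS_le i k hi t1k el.
set M := seqmax (UDS (~: B) pos destf t0); set T := look (cyc i k).
have UD0 j : j \notin B -> pos j t0 <= M /\ destf j t0 <= M.
  by move=> hj; split; apply/le_seqmax; [apply: mem_UDS_pos | apply: mem_UDS_dest];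
    rewrite inE.
have pos_le_M j : j \notin B -> pos j T <= M.
  apply: (correct_pos_le exec _ _ UD0); [lia | lia | exact: le_trans t01 (ltW t1k)].
have pos_S_le j : j \notin ~: S -> pos j T <= M - b.
  by rewrite inE negbK => jS; apply/(le_trans _ (UDS_le T t1k))/le_seqmax/mem_UDS_pos.
have := cardsC S; have := cardsC B; rewrite card_ord => cardB cardS.
apply: algo_dest_le_half => //; first exact: pos_le_M.
- by apply: (Pidx_snapshot_le pos_S_le) => //; lia.
- by apply: (Pidx_snapshot_le pos_le_M) => //; lia.
Qed.
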